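(* In the Fraïssé setting described in the context, the following are equivalent: (a) the pair $(G_0,G)$ is relatively extremely amenable and $Fix_{X_K}(G)$ is transitive with respect to $X_K$; (b) $X_K$ is the universal minimal space of $G_0$.
   Context: Setting: $L$ is a signature containing a binary relation symbol $<$, and $L_0=L\setminus\{<\}$. $K_0$ is a Fraïssé class of finite $L_0$-structures and $K$ is an order Fraïssé expansion of $K_0$: $K$ is a Fraïssé class of finite $L$-structures in each of which $<$ is a linear order, $K_0=\{A|L_0 : A\in K\}$, and $K$ is reasonable (for all $A_0\subset B_0$ in $K_0$ and every linear order $\prec$ on $A_0$ with $\langle A_0,\prec\rangle\in K$ there is a linear order $\prec'$ on $B_0$ extending $\prec$ with $\langle B_0,\prec'\rangle\in K$). Let $F=Flim(K)$ and $F_0=Flim(K_0)$ be the Fraïssé limits; then $F_0=F|L_0$. Let $G_0=Aut(F_0)$ and $G=Aut(F)\subset G_0$, with the pointwise convergence topology. Let $<_0=<^F$ be the order of $F$, viewed as an element of the space $LO(F_0)\subset\{0,1\}^{F_0\times F_0}$ of linear orderings of the underlying set of $F_0$ with the product topology, on which $G_0$ acts by $a\,(g\cdot\prec)\,b\iff g^{-1}a\prec g^{-1}b$. Set $X_K=\overline{G_0\cdot<_0}$ (the $K$-admissible orderings), a $G_0$-space, and $Fix_{X_K}(G)=\{\prec\in X_K: g\cdot\prec=\prec\ \forall g\in G\}$. A $G_0$-space is a compact Hausdorff space with a continuous $G_0$-action; it is minimal if it has no closed invariant subsets besides $\emptyset$ and itself; universal if every minimal $G_0$-space is its image under a continuous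 surjective equivariant map; the universal minimal space is the unique minimal universal one. $(G_0,G)$ is relatively extremely amenable if every $G_0$-space has a point fixed by every element of $G$. A subset $Y\subset X_K$ is transitive with respect to $X_K$ if $\overline{G_0 y}=X_K$ for every $y\in Y$. *)

From HB Require Import structures.
From mathcomp Require Import all_boot all_order all_algebra.
From mathcomp Require Import all_classical.
From mathcomp Require Import topology function_spaces.

Set Implicit Arguments.
Unset Strict Implicit.
Unset Printing Implicit Defensive.

Local Open Scope classical_set_scope.

(* A (general) first-order signature: relation symbols and function     *)
(* symbols (constants are function symbols of arity 0), with arities.   *)
Record signature := Signature {
  rsym : Type;
  rar : rsym -> nat;
  fsym : Type;
  far : fsym -> nat }.

Record structure (L : signature) (A : Type) := Structure {
  rint : forall r : rsym L, ('I_(rar r) -> A) -> bool;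
  fint : forall f : fsym L, ('I_(far f) -> A) -> A }.
Arguments Structure {L A}.
Arguments rint {L A} s r x : rename.
Arguments fint {L A} s f x : rename.

Definition embedding (L : signature) (A B : Type)
  (SA : structure L A) (SB : structure L B) (h : A -> B) : Prop :=
  [/\ injective h,
      (forall r (x : 'I_(rar r) -> A), rint SB r (h \o x) = rint SA r x) &
      (forall f (x : 'I_(far f) -> A), fint SB f (h \o x) = h (fint SA f x))].

Record aut (L : signature) (A : Type) (S : structure L A) := Aut {
  aut_fun :> A -> A;
  aut_inv : A -> A;
  aut_funK : cancel aut_fun aut_inv;
  aut_invK : cancel aut_inv aut_fun;
  aut_emb : embedding S S aut_fun }.

(* Finite L-structures: every finite structure is (isomorphic to) one    *)
(* whose carrier is 'I_n for some n.                                     *)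
Definition fstruct (L : signature) := {n : nat & structure L 'I_n}.
Definition fsize L (A : fstruct L) : nat := projT1 A.
Definition fst_str L (A : fstruct L) : structure L 'I_(fsize A) := projT2 A.

Definition fclass (L : signature) := fstruct L -> Prop.

Definition embeds (L : signature) (A : fstruct L) (B : Type)
  (S : structure L B) : Prop :=
  exists h : 'I_(fsize A) -> B, embedding (fst_str A) S h.

Definition isomorphic (L : signature) (A B : fstruct L) : Prop :=
  exists h : 'I_(fsize A) -> 'I_(fsize B),
    embedding (fst_str A) (fst_str B) h /\ bijective h.

(* Fraisse classes (Kechris-Pestov-Todorcevic): hereditary (this also    *)
(* gives closure under isomorphism), joint embedding, amalgamation,      *)
(* countably many isomorphism types, arbitrarily large finite members.   *)
Definition Fraisse_class (L : signature) (K : fclass L) : Prop :=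
  [/\ (forall A B : fstruct L, K A -> embeds B (fst_str A) -> K B),
      (forall A B : fstruct L, K A -> K B ->
         exists C, [/\ K C, embeds A (fst_str C) & embeds B (fst_str C)]),
      (forall (A B C : fstruct L)
              (f : 'I_(fsize A) -> 'I_(fsize B))
              (g : 'I_(fsize A) -> 'I_(fsize C)),
         K A -> K B -> K C ->
         embedding (fst_str A) (fst_str B) f ->
         embedding (fst_str A) (fst_str C) g ->
         exists (D : fstruct L) (f' : 'I_(fsize B) -> 'I_(fsize D))
                (g' : 'I_(fsize C) -> 'I_(fsize D)),
           [/\ K D, embedding (fst_str B) (fst_str D) f',
               embedding (fst_str C) (fst_str D) g' &
               forall a, f' (f a) = g' (g a)]),
      (exists e : nat -> fstruct L,
         forall A, K A -> exists i, isomorphic A (e i)) &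
      (forall m : nat, exists A, K A /\ (m <= fsize A)%N)].

Definition locally_finite (L : signature) (T : eqType) (F : structure L T) :=
  forall s : seq T, exists s' : seq T,
    {subset s <= s'} /\
    forall f (x : 'I_(far f) -> T), (forall i, x i \in s') -> fint F f x \in s'.

(* Ultrahomogeneity: every isomorphism between finite substructures      *)
(* extends to an automorphism (phrased with embeddings of a finite       *)
(* structure A: any two copies of A in F are moved onto each other).     *)
Definition ultrahomogeneous (L : signature) (T : Type) (F : structure L T) :=
  forall (A : fstruct L) (e1 e2 : 'I_(fsize A) -> T),
    embedding (fst_str A) F e1 -> embedding (fst_str A) F e2 ->
    exists g : aut F, forall i, g (e1 i) = e2 i.

Definition is_Flim (L : signature) (K : fclass L) (T : countType)
  (F : structure L T) : Prop :=
  [/\ locally_finite F, ultrahomogeneous F &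
      forall A : fstruct L, K A <-> embeds A F].

(* L = L0 together with one new binary relation symbol < (= None). *)
Definition ext_sig (L0 : signature) : signature :=
  {| rsym := option (rsym L0);
     rar := fun o => if o is Some r then rar r else 2%N;
     fsym := fsym L0;
     far := @far L0 |}.

Definition order_of (L0 : signature) (A : Type) (S : structure (ext_sig L0) A)
  : rel A :=
  fun a b => rint S None (fun i : 'I_2 => if val i == 0%N then a else b).

Definition reduct (L0 : signature) (A : Type) (S : structure (ext_sig L0) A)
  : structure L0 A :=
  {| rint := fun r => rint S (Some r); fint := fint S |}.

Definition freduct (L0 : signature) (A : fstruct (ext_sig L0)) : fstruct L0 :=
  existT _ (fsize A) (reduct (fst_str A)).

Definition expand (L0 : signature) (A : Type) (S : structure L0 A) (lt : rel A)
  : structure (ext_sig L0) A :=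
  {| rint := fun o =>
       match o return ('I_(@rar (ext_sig L0) o) -> A) -> bool with
       | Some r => rint S r
       | None => fun x => lt (x ord0) (x ord_max)
       end;
     fint := fint S |}.

Definition fexpand (L0 : signature) (A : fstruct L0) (lt : rel 'I_(fsize A))
  : fstruct (ext_sig L0) :=
  existT _ (fsize A) (expand (fst_str A) lt).

Definition reduct_class (L0 : signature) (K : fclass (ext_sig L0)) : fclass L0 :=
  fun A0 => exists A, K A /\ freduct A = A0.

Definition linear_order (A : Type) (lt : rel A) : Prop :=
  [/\ (forall a, ~~ lt a a),
      (forall a b c, lt a b -> lt b c -> lt a c) &
      (forall a b, a <> b -> lt a b \/ lt b a)].

Definition reasonable (L0 : signature) (K : fclass (ext_sig L0)) : Prop :=
  forall (A0 B0 : fstruct L0) (e : 'I_(fsize A0) -> 'I_(fsize B0))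
         (lt : rel 'I_(fsize A0)),
    reduct_class K A0 -> reduct_class K B0 ->
    embedding (fst_str A0) (fst_str B0) e ->
    K (fexpand lt) ->
    exists lt' : rel 'I_(fsize B0),
      K (fexpand lt') /\ forall a b, lt' (e a) (e b) = lt a b.

(* G0-spaces, for G0 = Aut(S) with the pointwise convergence topology   *)
(* (basic neighbourhoods of g: {h | h = g on a finite set s}).          *)

Section Flows.
Context (L : signature) (T : countType) (S : structure L T).

Definition is_action (X : Type) (act : aut S -> X -> X) : Prop :=
  (forall g : aut S, (forall a, g a = a) -> forall x, act g x = x) /\
  (forall g h k : aut S, (forall a, k a = g (h a)) ->
     forall x, act k x = act g (act h x)).

(* joint continuity of G0 x X -> X *)
Definition act_continuous (X : topologicalType) (act : aut S -> X -> X) : Prop :=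
  forall (g : aut S) (x : X) (W : set X), nbhs (act g x) W ->
    exists (s : seq T) (V : set X), nbhs x V /\
      forall h : aut S, (forall a, a \in s -> h a = g a) ->
        forall y, V y -> W (act h y).

Definition G0space (X : topologicalType) (act : aut S -> X -> X) : Prop :=
  [/\ [set: X] !=set0, compact [set: X], hausdorff_space X,
      is_action act & act_continuous act].

Definition invariant (X : Type) (act : aut S -> X -> X) (Y : set X) : Prop :=
  forall g y, Y y -> Y (act g y).

Definition minimal_G0space (X : topologicalType) (act : aut S -> X -> X) :=
  G0space act /\
  forall Y : set X, closed Y -> invariant act Y -> Y = set0 \/ Y = setT.

(* (G0, G) is relatively extremely amenable, G given as a subgroup       *)
(* (predicate) inG of G0.                                                *)
Definition rel_extremely_amenable (inG : aut S -> Prop) : Prop :=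
  forall (X : topologicalType) (act : aut S -> X -> X),
    G0space act -> exists x : X, forall g, inG g -> act g x = x.

End Flows.

Section XK.
Context (L0 : signature) (T : countType) (F : structure (ext_sig L0) T).

Definition LOspace := {ptws (T * T) -> bool}.

Definition F0 : structure L0 T := reduct F.

(* G = Aut(F), as a subset of G0 = Aut(F0) *)
Definition inG (g : aut F0) : Prop :=
  forall a b, order_of F (g a) (g b) = order_of F a b.

Definition lt0 : LOspace := fun p => order_of F p.1 p.2.

Definition actLO (g : aut F0) (R : LOspace) : LOspace :=
  fun p => R (aut_inv g p.1, aut_inv g p.2).

Definition orbitLO (R : LOspace) : set LOspace := range (fun g => actLO g R).

Definition XK : set LOspace := closure (orbitLO lt0).

Definition FixXK : set LOspace :=
  [set R | XK R /\ forall g, inG g -> actLO g R = R].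

Definition transitive_wrt_XK (Y : set LOspace) : Prop :=
  forall y, Y y -> closure (orbitLO y) = XK.

Definition XK_minimal : Prop :=
  forall Y : set LOspace, Y `<=` XK -> closed Y -> invariant actLO Y ->
    Y = set0 \/ Y = XK.

Definition XK_universal : Prop :=
  forall (M : topologicalType) (actM : aut F0 -> M -> M),
    minimal_G0space actM ->
    exists f : LOspace -> M,
      [/\ {within XK, continuous f}, f @` XK = setT &
          forall g R, XK R -> f (actLO g R) = actM g (f R)].

Definition XK_universal_minimal : Prop := XK_minimal /\ XK_universal.

End XK.

From Pilot Require Import Defs.
From mathcomp Require Import all_boot.
From mathcomp Require Import all_classical.
From mathcomp Require Import topology function_spaces.

(* For (a) -> (b): a point of a closed invariant subset of X_K fixed by G lies
   in Fix_{X_K}(G), whose orbit closure is X_K, so X_K is minimal. Given a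
   minimal flow M, relative extreme amenability provides a G-fixed x in M, and
   g . <_0 |-> g . x extends to X_K: for R in X_K, the points g . x with
   g . <_0 close to R converge. The limit is unique because, by
   ultrahomogeneity, two translates g . <_0 and h . <_0 agreeing on enough
   pairs satisfy k g^-1 = h^-1 on a prescribed finite set for some k in G, and
   k fixes x. For (b) -> (a): X_K maps onto a minimal subflow of any flow,
   carrying the G-fixed point <_0 to a G-fixed point; transitivity of
   Fix_{X_K}(G) is a consequence of minimality. *)

Set Implicit Arguments.
Unset Strict Implicit.
Unset Printing Implicit Defensive.

Local Open Scope classical_set_scope.

Lemma embedding_comp (L : signature) (A B C : Type) (SA : structure L A)
    (SB : structure L B) (SC : structure L C) (g : B -> C) (h : A -> B) :
  embedding SB SC g -> embedding SA SB h -> embedding SA SC (g \o h).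
Proof.
move=> [gi gr gf] [hi hr hf]; split.
- by move=> a b /gi /hi.
- by move=> r x; rewrite -(hr r x) -(gr r (h \o x)).
- by move=> f x /=; rewrite -hf -gf.
Qed.

Section AutGroup.
Context (L : signature) (A : Type) (S : structure L A).

Lemma embedding_aut_inv (g : aut S) : embedding S S (aut_inv g).
Proof.
have [_ gr gf] := aut_emb g; split.
- exact: (can_inj (aut_invK g)).
- move=> r x; rewrite -(gr r (aut_inv g \o x)); congr (rint S r _).
  by apply: funext => i /=; rewrite aut_invK.
- move=> f x; apply: (can_inj (aut_funK g)); rewrite aut_invK -gf.
  by congr (fint S f _); apply: funext => i /=; rewrite aut_invK.
Qed.

Lemma embedding_id : embedding S S id.
Proof. by split. Qed.

Definition id_aut : aut S :=
  @Aut L A S id id (fun _ => erefl) (fun _ => erefl) embedding_id.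

Definition inv_aut (g : aut S) : aut S :=
  Aut (aut_invK g) (aut_funK g) (embedding_aut_inv g).

Definition comp_aut (g h : aut S) : aut S.
Proof.
refine (@Aut L A S (g \o h) (aut_inv h \o aut_inv g) _ _
  (embedding_comp (aut_emb g) (aut_emb h))).
- by move=> a /=; rewrite !aut_funK.
- by move=> a /=; rewrite !aut_invK.
Defined.

End AutGroup.

Section LOtopology.
Context (T : countType).
Local Notation LO := (LOspace T).

Lemma LO_compact : compact [set: LO].
Proof.
have bool_compact : compact [set: bool] by apply: finite_compact; exact: finite_finset.
have := @tychonoff (T * T)%type (fun _ => bool) (fun _ => setT) (fun _ => bool_compact).
by congr compact; apply/seteqP; split.
Qed.

Lemma LO_hausdorff : hausdorff_space LO.
Proof. exact: (@hausdorff_product _ (fun _ => bool) (fun _ => discrete_hausdorff)). Qed.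

(* The sets [agree R ^~ P] form a neighbourhood basis of [R]. *)
Definition agree (R Q : LO) (P : seq (T * T)) := forall p, p \in P -> Q p = R p.

Lemma agree_cat (R Q : LO) P1 P2 :
  agree R Q (P1 ++ P2) <-> agree R Q P1 /\ agree R Q P2.
Proof.
split; first by move=> H; split => p Hp; apply: H; rewrite mem_cat Hp ?orbT.
by move=> [H1 H2] p; rewrite mem_cat => /orP [/H1|/H2].
Qed.

Lemma open_eval (p : T * T) (b : bool) : open [set Q : LO | Q p = b].
Proof.
have -> : [set Q : LO | Q p = b] = @proj _ (fun _ => bool) p @^-1` [set b] by [].
by apply: open_comp; [move=> Q _; exact: proj_continuous | exact: discrete_open].
Qed.

Lemma open_agree (R : LO) P : open [set Q | agree R Q P].
Proof.
elim: P => [|p P IH].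
  by rewrite (_ : [set Q | _] = setT); [exact: openT | apply/seteqP; split].
rewrite (_ : [set Q | _] = [set Q : LO | Q p = R p] `&` [set Q | agree R Q P]).
  exact: openI (open_eval _ _) IH.
apply/seteqP; split => Q; rewrite /= -cat1s.
  by move=> /agree_cat [H1 H2]; split => //; apply: H1; rewrite mem_seq1.
by move=> [H1 H2]; apply/agree_cat; split => // q; rewrite mem_seq1 => /eqP ->.
Qed.

Lemma nbhs_agree (R : LO) P : nbhs R [set Q | agree R Q P].
Proof. by apply: open_nbhs_nbhs; split; [exact: open_agree|]. Qed.

Lemma cvg_LO (Fl : set_system LO) (R : LO) :
  Filter Fl -> (forall p, Fl [set Q : LO | Q p = R p]) -> Fl --> R.
Proof.
move=> FF H; apply/cvg_sup => p A [B [[O Oo <-] OR] BA].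
by apply: (filterS BA); apply: filterS (H p) => Q /= ->; exact: OR.
Qed.

End LOtopology.

Lemma agree_cluster (T : countType) (X : topologicalType) (I : Type) (D : set I)
    (p : I -> LOspace T) (q : I -> X) (R : LOspace T) :
  compact [set: X] -> (forall P, exists2 i, D i & agree R (p i) P) ->
  exists m : X, forall P U, nbhs m U -> exists i, [/\ D i, agree R (p i) P & U (q i)].
Proof.
move=> Xc R_lim.
pose Fl := [set W : set X | exists P, forall i, D i -> agree R (p i) P -> W (q i)].
have FlP : ProperFilter Fl.
  split; first by move=> [P HP]; have [i Di /(HP i Di)] := R_lim P.
  constructor.
  - by exists [::].
  - move=> A B [P1 H1] [P2 H2]; exists (P1 ++ P2) => i Di /agree_cat [A1 A2].
    by split; [exact: H1 | exact: H2].
  - by move=> A B AB [P HP]; exists P => i Di /(HP i Di) /AB.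
have [m [_ clm]] := Xc Fl FlP filterT; exists m => P U Um.
have : Fl [set y | exists i, [/\ D i, agree R (p i) P & y = q i]].
  by exists P => i Di Ai; exists i.
by move=> /clm /(_ Um) [_ [[i [Di Ai ->]] Ui]]; exists i.
Qed.

Section Flows.
Context (L : signature) (T : countType) (S : structure L T).
Context (X : topologicalType) (act : aut S -> X -> X).

(* [act_continuous act] says that [joint_nbhs g x] refines [nbhs (act g x)]. *)
Definition joint_nbhs (g : aut S) (x : X) : set_system X :=
  [set W | exists (s : seq T) (V : set X), nbhs x V /\
     forall h : aut S, (forall a, a \in s -> h a = g a) ->
       forall y, V y -> W (act h y)].

Lemma joint_nbhs_filter g x : Filter (joint_nbhs g x).
Proof.
constructor.
- by exists [::], setT; split; [exact: filterT|].
- move=> A B [s1 [V1 [N1 H1]]] [s2 [V2 [N2 H2]]].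
  exists (s1 ++ s2), (V1 `&` V2); split; first exact: filterI.
  move=> h hs y [y1 y2]; split.
    by apply: H1 y1 => a as1; apply: hs; rewrite mem_cat as1.
  by apply: H2 y2 => a as2; apply: hs; rewrite mem_cat as2 orbT.
- by move=> A B AB [s [V [N H]]]; exists s, V; split => // h hs y /(H h hs) /AB.
Qed.

Lemma act_continuous_each : act_continuous act -> forall g, continuous (act g).
Proof.
move=> Hc g x W /Hc [s [V [NV HV]]].
by apply: filterS NV => y; apply: (HV g).
Qed.

Lemma closure_invariant (Y : set X) : act_continuous act ->
  Defs.invariant act Y -> Defs.invariant act (closure Y).
Proof.
move=> Hc HY g y Cy B NB.
have /Cy [z [Yz Bz]] : nbhs y (act g @^-1` B) by exact: act_continuous_each.
by exists (act g z); split => //; apply: HY.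
Qed.

Definition minimal_set (Y : set X) :=
  [/\ closed Y, Defs.invariant act Y, Y !=set0 &
     forall Y' : set X, closed Y' -> Defs.invariant act Y' -> Y' !=set0 ->
        Y' `<=` Y -> Y' = Y].

Section Subflow.
Variable Y : set X.
Hypothesis Yinv : Defs.invariant act Y.

Definition sub_act (g : aut S) (y : set_type Y) : set_type Y :=
  exist _ (act g (set_val y)) (mem_set (Yinv g (set_mem (valP y)))).

Lemma nbhs_set_val (y : set_type Y) (B : set X) :
  nbhs (set_val y) B -> nbhs y (set_val @^-1` B).
Proof. by move=> /initial_continuous [C [oC Cy CB]]; exists C. Qed.

Lemma nbhs_set_typeP (y : set_type Y) (B : set (set_type Y)) :
  nbhs y B -> exists O : set X, [/\ open O, O (set_val y) & set_val @^-1` O `<=` B].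
Proof. by move=> [B' [[O Oo <-] Oy] BB']; exists O. Qed.

Lemma closed_set_typeP (Z : set (set_type Y)) : closed Z ->
  exists O : set X, open O /\ Z = set_val @^-1` (~` O).
Proof.
move=> /closed_openC [O Oo EO]; exists O; split => //.
by rewrite preimage_setC; apply: setC_inj; rewrite setCK -EO.
Qed.

Lemma set_type_compact : closed Y -> compact [set: X] -> compact [set: set_type Y].
Proof.
move=> cY Xc Fl PFl _.
have FY : (set_val @ Fl) Y.
  by apply: (@filterS _ Fl _ setT); [move=> z _; exact: set_mem (valP z) | exact: filterT].
have Yc : compact Y by exact: subclosed_compact cY Xc _.
have [p [Yp clp]] := Yc _ (fmap_proper_filter set_val PFl) FY.
exists (exist _ p (mem_set Yp)); split => // A B FA /nbhs_set_typeP [O [Oo Op OB]].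
have /clp : (set_val @ Fl) (set_val @` A).
  suff H : Fl (set_val @^-1` (set_val @` A)) by exact: H.
  by apply: filterS FA => z Az; exists z.
move=> /(_ O (open_nbhs_nbhs (conj Oo Op))) [_ [[z Az <-] Oz]].
by exists z; split => //; apply: OB.
Qed.

Lemma sub_G0space : closed Y -> Y !=set0 -> G0space act -> G0space sub_act.
Proof.
move=> cY [y0 Yy0] [_ Xc Xh [Ha1 Ha2] Hac]; split.
- by exists (exist _ y0 (mem_set Yy0)).
- exact: set_type_compact.
- move=> p q clpq; apply: val_inj; apply: Xh => A B NA NB.
  have [z [Az Bz]] := clpq _ _ (nbhs_set_val NA) (nbhs_set_val NB).
  by exists (set_val z).
- split; first by move=> g Hg y; apply: val_inj; rewrite /= Ha1.
  by move=> g h k Hk y; apply: val_inj; rewrite /= (Ha2 g h k).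
- move=> g y W /nbhs_set_typeP [O [Oo Oy OW]].
  have [s [V [NV HV]]] := Hac g (set_val y) O (open_nbhs_nbhs (conj Oo Oy)).
  exists s, (set_val @^-1` V); split; first exact: nbhs_set_val.
  by move=> h hs z Vz; apply: OW; apply: (HV h hs).
Qed.

Lemma sub_minimal_G0space : minimal_set Y -> G0space act -> minimal_G0space sub_act.
Proof.
move=> [cY _ nY mY] HG; split; first exact: sub_G0space.
move=> Z cZ iZ; have [[z Zz]|nZ] := pselect (Z !=set0); last first.
  by left; apply/seteqP; split => // w Zw; apply: nZ; exists w.
right; have [O [Oo EZ]] := closed_set_typeP cZ.
have imZ : set_val @` Z = Y `&` ~` O.
  apply/seteqP; split; first by move=> _ [w + <-]; rewrite EZ; split => //; exact: set_mem (valP w).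
  by move=> w [Yw Ow]; exists (exist _ w (mem_set Yw)); rewrite ?EZ.
have imZ_Y : set_val @` Z = Y.
  apply: mY.
  - by rewrite imZ; apply: closedI => //; rewrite closedC.
  - by move=> g _ [w Zw <-]; exists (sub_act g w) => //; exact: iZ.
  - by exists (set_val z), z.
  - by rewrite imZ; exact: subIsetl.
apply/seteqP; split => // w _; rewrite EZ; suff : (Y `&` ~` O) (set_val w) by case.
by rewrite -imZ imZ_Y; exact: set_mem (valP w).
Qed.

End Subflow.

Lemma compact_chain_not_cover (Fc : set (set X)) :
  compact [set: X] -> [set: X] !=set0 ->
  (forall C, Fc C -> closed (~` C) /\ ~` C !=set0) -> total_on Fc subset ->
  ~` (\bigcup_(C in Fc) C) !=set0.
Proof.
move=> Xc [x0 _] FcP tot.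
pose Fl := [set B : set X | exists C, (C = set0 \/ Fc C) /\ ~` C `<=` B].
have nonempty_compl C : C = set0 \/ Fc C -> ~` C !=set0.
  by case=> [->|/FcP [] //]; exists x0; rewrite setC0.
have FlP : ProperFilter Fl.
  split; first by move=> [C [/nonempty_compl [w Cw] /(_ w Cw)]].
  constructor.
  - by exists set0; split; [left|].
  - move=> A B [C1 [H1 S1]] [C2 [H2 S2]].
    have [C12|C21] : C1 `<=` C2 \/ C2 `<=` C1.
      case: H1 => [->|F1]; first by left.
      case: H2 => [->|F2]; [by right | exact: tot].
    + by exists C2; split => // w Cw; split; [apply: S1 => /C12 | apply: S2].
    + by exists C1; split => // w Cw; split; [apply: S1 | apply: S2 => /C21].
  - by move=> A B AB [C [HC CA]]; exists C; split => //; apply: subset_trans AB.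
have [p [_ clp]] := Xc Fl FlP filterT.
exists p => -[C FC Cp]; have [cC _] := FcP C FC.
suff : closure (~` C) p by rewrite -(proj1 (closure_id _) cC) => /(_ Cp).
by move=> B NB; apply: clp => //; exists C; split => //; right.
Qed.

(* Zorn's lemma, applied to the complements of closed invariant sets. *)
Lemma exists_minimal_set : G0space act -> exists Y, minimal_set Y.
Proof.
move=> [X0 Xc _ _ Hac].
pose P := [set C : set X | [/\ closed (~` C), Defs.invariant act (~` C) & ~` C !=set0]].
have [C [[cC iC nC] maxC]] : exists C, P C /\ (forall B, C `<` B -> ~ P B).
  apply: Zorn_bigcup => Fc FcP tot; split.
  - rewrite closedC; apply: bigcup_open => C /FcP [+ _]; by rewrite closedC.
  - move=> g z Hz [C FC Cz]; apply: Hz; exists C => //.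
    have [_ iC _] := FcP C FC; apply: contrapT => nCz; exact: (iC g z nCz Cz).
  - by apply: compact_chain_not_cover => // C /FcP [].
exists (~` C); split => // Y' cY' iY' nY' sY'.
apply: contrapT => neq; apply: (maxC (~` Y')); last by rewrite /P /= setCK.
split; first by move=> w Cw Yw; apply: (sY' w Yw).
move=> sub; apply: neq; apply/seteqP; split => // w Cw.
by apply: contrapT => /sub.
Qed.

End Flows.

Section OrderingSpace.
Context {L0 : signature} {T : countType} (F : structure (ext_sig L0) T).
Local Notation LO := (LOspace T).
Local Notation G0 := (aut (F0 F)).
Local Notation act := (@actLO L0 T F).
Local Notation lt := (lt0 F).

Lemma actLO_is_action : is_action act.
Proof.
split=> [g gid R|g h k hk R]; apply: funext => -[a b].
  have inv_id c : aut_inv g c = c by rewrite -{2}(aut_invK g c) gid.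
  by rewrite /actLO /= !inv_id.
have invE c : aut_inv k c = aut_inv h (aut_inv g c).
  by apply: (can_inj (aut_funK k)); rewrite aut_invK hk !aut_invK.
by rewrite /actLO /= !invE.
Qed.

Lemma actLO_continuous : act_continuous act.
Proof.
move=> g R; apply: cvg_LO; first exact: joint_nbhs_filter.
move=> t; pose s := [:: aut_inv g t.1; aut_inv g t.2].
exists s, [set Q | agree R Q [:: (aut_inv g t.1, aut_inv g t.2)]].
split; first exact: nbhs_agree.
move=> h hs Q RQ; have invE c : c \in s -> aut_inv h (g c) = c.
  by move=> /hs <-; rewrite aut_funK.
rewrite /= /actLO -{1}(aut_invK g t.1) -{1}(aut_invK g t.2) !invE ?inE ?eqxx ?orbT //.
by apply: RQ; rewrite inE.
Qed.

Lemma actLO_G0space : G0space act.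
Proof.
split; [by exists lt | exact: LO_compact | exact: LO_hausdorff |
        exact: actLO_is_action | exact: actLO_continuous].
Qed.

Lemma actLO_comp (g h : G0) R : act (comp_aut g h) R = act g (act h R).
Proof. by apply: (proj2 actLO_is_action). Qed.

Lemma orbitLO_refl R : orbitLO F R R.
Proof. by exists (id_aut (F0 F)); last by apply: (proj1 actLO_is_action). Qed.

Lemma closure_orbitLO_invariant R : Defs.invariant act (closure (orbitLO F R)).
Proof.
apply: closure_invariant; first exact: actLO_continuous.
by move=> g _ [h _ <-]; exists (comp_aut g h) => //; rewrite actLO_comp.
Qed.

Lemma closure_orbitLO_sub (Y : set LO) R :
  closed Y -> Defs.invariant act Y -> Y R -> closure (orbitLO F R) `<=` Y.
Proof.
move=> cY iY YR; rewrite (proj1 (closure_id Y) cY); apply: closureS.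
by move=> _ [g _ <-]; apply: iY.
Qed.

Lemma XK_invariant : Defs.invariant act (XK F).
Proof. exact: closure_orbitLO_invariant. Qed.

Lemma XK_lt0 : XK F lt.
Proof. exact/subset_closure/orbitLO_refl. Qed.

Lemma XK_closed : closed (XK F).
Proof. exact: closed_closure. Qed.

Lemma XK_compact : compact (XK F).
Proof. exact: (subclosed_compact XK_closed (@LO_compact T)). Qed.

Lemma actLO_lt0_fixed (g : G0) : inG g -> act g lt = lt.
Proof.
move=> Hg; apply: funext => -[a b].
by rewrite /actLO /lt0 /= -[in RHS](aut_invK g a) -[in RHS](aut_invK g b) Hg.
Qed.

End OrderingSpace.

Lemma locally_finite_substructure (L : signature) (T : eqType) (F : structure L T)
    (s : seq T) :
  locally_finite F ->
  exists (n : nat) (B : structure L 'I_n) (e : 'I_n -> T),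
    embedding B F e /\ {subset s <= codom e}.
Proof.
move=> /(_ s) [s1 [ss1 cl1]]; pose n := size (undup s1).
pose e : 'I_n -> T := tnth (in_tuple (undup s1)).
have idx_lt a : a \in undup s1 -> (index a (undup s1) < n)%N by rewrite index_mem.
have e_index a (Ha : a \in undup s1) : e (Ordinal (idx_lt a Ha)) = a.
  by rewrite /e (tnth_nth a) nth_index.
have e_closed f (x : 'I_(far f) -> 'I_n) : fint F f (e \o x) \in undup s1.
  by rewrite mem_undup; apply: cl1 => i; rewrite -mem_undup; exact: mem_tnth.
pose B := {| rint := fun r x => rint F r (e \o x);
             fint := fun f x => Ordinal (idx_lt _ (e_closed f x)) |}.
exists n, B, e; split.
- split=> //; last by move=> f x; rewrite e_index.
  by apply/tuple_uniqP; exact: undup_uniq.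
- move=> a /ss1; rewrite -mem_undup => Ha.
  by rewrite -(e_index a Ha); exact: codom_f.
Qed.

Section OrderExpansion.
Context {L0 : signature} {T : countType} (F : structure (ext_sig L0) T).
Local Notation G0 := (aut (F0 F)).

Lemma rint_None (x : 'I_2 -> T) : rint F None x = order_of F (x ord0) (x ord_max).
Proof.
rewrite /order_of; congr (rint F None _); apply: funext.
by case=> -[|[|m]] Hm //=; congr x; apply: val_inj.
Qed.

Lemma embedding_reduct (k : T -> T) : embedding F F k -> embedding (F0 F) (F0 F) k.
Proof. by move=> [ki kr kf]; split => // r; exact: (kr (Some r)). Qed.

Lemma embedding_order (k : T -> T) : embedding F F k ->
  forall a b, order_of F (k a) (k b) = order_of F a b.
Proof.
move=> [_ kr _] a b.
rewrite /order_of -(kr None (fun i : 'I_2 => if val i == 0%N then a else b)).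
by congr (rint F None _); apply: funext => i /=; case: ifP.
Qed.

Definition reduct_aut (k : aut F) : G0 :=
  Aut (aut_funK k) (aut_invK k) (embedding_reduct (aut_emb k)).

Lemma inG_reduct_aut (k : aut F) : inG (reduct_aut k).
Proof. exact: (embedding_order (aut_emb k)). Qed.

Lemma embedding_expand (A : Type) (B : structure L0 A) (e : A -> T) :
  embedding B (F0 F) e ->
  embedding (expand B (fun a b => order_of F (e a) (e b))) F e.
Proof.
move=> [ei er ef]; split=> // -[r|] x; first exact: (er r).
by rewrite rint_None.
Qed.

Hypothesis F_locally_finite : locally_finite F.
Hypothesis F_ultrahomogeneous : ultrahomogeneous F.

Lemma agree_translates_lt0 (s : seq T) : exists P : seq (T * T), forall g h : G0,
  agree (actLO g (lt0 F)) (actLO h (lt0 F)) P ->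
  exists k : G0, inG k /\ forall a, a \in s -> k (aut_inv g a) = aut_inv h a.
Proof.
have F0_lf : locally_finite (F0 F) by [].
have [n [B [e [eB s_e]]]] := locally_finite_substructure s F0_lf.
exists [seq (e i, e j) | i <- enum 'I_n, j <- enum 'I_n] => g h agh.
pose eg := aut_inv g \o e; pose eh := aut_inv h \o e.
have eg_emb : embedding B (F0 F) eg by exact: embedding_comp (embedding_aut_inv g) eB.
have eh_emb : embedding B (F0 F) eh by exact: embedding_comp (embedding_aut_inv h) eB.
have same_order : (fun i j => order_of F (eg i) (eg j)) = (fun i j => order_of F (eh i) (eh j)).
  apply: funext => i; apply: funext => j; symmetry.
  by apply: (agh (e i, e j)); apply: allpairs_f; rewrite mem_enum.
pose A := @fexpand _ (existT _ n B) (fun i j => order_of F (eg i) (eg j)).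
have eg_Femb : embedding (fst_str A) F eg := embedding_expand eg_emb.
have eh_Femb : embedding (fst_str A) F eh.
  by rewrite /A /fexpand /= same_order; exact: embedding_expand.
have [k kE] := F_ultrahomogeneous eg_Femb eh_Femb.
exists (reduct_aut k); split; first exact: inG_reduct_aut.
by move=> _ /s_e /codomP [i ->]; exact: kE.
Qed.

End OrderExpansion.

Section Implications.
Context {L0 : signature} {T : countType} (F : structure (ext_sig L0) T).
Local Notation LO := (LOspace T).
Local Notation G0 := (aut (F0 F)).
Local Notation act := (@actLO L0 T F).
Local Notation lt := (lt0 F).

Lemma transitive_Fix_of_minimal : XK_minimal F -> transitive_wrt_XK F (FixXK F).
Proof.
move=> XKmin R [XR _].
have sub : closure (orbitLO F R) `<=` XK F.
  by apply: closure_orbitLO_sub XR; [exact: XK_closed | exact: XK_invariant].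
have [E|] := XKmin _ sub (@closed_closure _ _) (@closure_orbitLO_invariant _ _ _ R) => //.
have : closure (orbitLO F R) R by exact/subset_closure/orbitLO_refl.
by rewrite E.
Qed.

(* A fixed point is obtained in a minimal subflow, as the image of [<_0]. *)
Lemma rel_extremely_amenable_of_universal :
  XK_universal F -> rel_extremely_amenable (@inG L0 T F).
Proof.
move=> XKuniv X actX Xflow.
have [Y minY] := exists_minimal_set Xflow; have [_ iY _ _] := minY.
have [f [_ _ f_equiv]] := XKuniv _ _ (sub_minimal_G0space iY minY Xflow).
exists (set_val (f lt)) => g Gg.
have := f_equiv g lt (@XK_lt0 _ _ F); rewrite actLO_lt0_fixed // => f_lt.
by rewrite [in RHS]f_lt.
Qed.

Lemma minimal_of_rel_extremely_amenable :
  rel_extremely_amenable (@inG L0 T F) -> transitive_wrt_XK F (FixXK F) ->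
  XK_minimal F.
Proof.
move=> rea trans Y sY cY iY.
have [[y Yy]|nY] := pselect (Y !=set0); last first.
  by left; apply/seteqP; split => // w Yw; apply: nY; exists w.
right; have [z z_fixed] := rea _ _ (sub_G0space iY cY (ex_intro _ y Yy) (actLO_G0space F)).
have Yz : Y (set_val z) by exact: set_mem (valP z).
have Fix_z : FixXK F (set_val z).
  by split=> [|g Gg]; [exact: sY | exact: (congr1 set_val (z_fixed g Gg))].
by apply/seteqP; split => //; rewrite -(trans _ Fix_z); exact: closure_orbitLO_sub.
Qed.

End Implications.

Section Universality.
Context {L0 : signature} {T : countType} (F : structure (ext_sig L0) T).
Local Notation LO := (LOspace T).
Local Notation G0 := (aut (F0 F)).
Local Notation act := (@actLO L0 T F).
Local Notation lt := (lt0 F).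
Hypothesis F_locally_finite : locally_finite F.
Hypothesis F_ultrahomogeneous : ultrahomogeneous F.

Variables (M : topologicalType) (actM : G0 -> M -> M).
Hypothesis M_minimal : minimal_G0space actM.
Variable x : M.
Hypothesis x_fixed : forall g, inG g -> actM g x = x.

(* The universal map sends [g . <_0] to [g . x]; [orbit_limit R m] says that
   [m] is a limit of [g . x] as [g . <_0] tends to [R]. *)
Definition orbit_limit (R : LO) (m : M) := forall P U, nbhs m U ->
  exists g : G0, agree R (act g lt) P /\ U (actM g x).

Lemma orbit_limit_exists R : XK F R -> exists m, orbit_limit R m.
Proof.
have [[_ Mc _ _ _] _] := M_minimal.
move=> XR; have [P|m m_lim] :=
  @agree_cluster _ _ _ setT (fun g => act g lt) (fun g => actM g x) R Mc.
  by have [_ [[g _ <-] Ag]] := XR _ (nbhs_agree R P); exists g.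
by exists m => P U /(m_lim P) [g [_ Ag Ug]]; exists g.
Qed.

(* If [g . <_0] and [h . <_0] are close, then [h . x] is close to [g . x]
   moved by an automorphism fixing a prescribed finite set, hence close to
   [g . x] itself by joint continuity. *)
Lemma orbit_limit_unique R m1 m2 : orbit_limit R m1 -> orbit_limit R m2 -> m1 = m2.
Proof.
have [[_ _ Mh [act1 actM_comp] Mc] _] := M_minimal.
move=> lim1 lim2; apply: contrapT => /eqP neq.
move: Mh; rewrite open_hausdorff => /(_ m1 m2 neq).
move=> [[U1 U2] /= [/set_mem m1U1 /set_mem m2U2] [o1 o2 /eqP disj]].
have [s [V [NV HV]]] : joint_nbhs actM (id_aut (F0 F)) m1 U1.
  by apply: Mc; rewrite act1 //; exact: open_nbhs_nbhs.
have [P HP] := agree_translates_lt0 F_locally_finite F_ultrahomogeneous s.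
have [g [Ag Vg]] := lim1 P V NV.
have [h [Ah Uh]] := lim2 P U2 (open_nbhs_nbhs (conj o2 m2U2)).
have [k [Gk kE]] : exists k : G0, inG k /\ forall a, a \in s -> k (aut_inv g a) = aut_inv h a.
  by apply: HP => p Hp; rewrite (Ah p Hp) (Ag p Hp).
pose v := comp_aut h (comp_aut k (inv_aut g)).
have v_s a : a \in s -> v a = id_aut (F0 F) a by move=> Ha; rewrite /= kE // aut_invK.
have hx_v : actM h x = actM v (actM g x).
  rewrite -{1}(x_fixed Gk) -(actM_comp h k (comp_aut h k)) //.
  by apply: actM_comp => a /=; rewrite aut_funK.
have : (U1 `&` U2) (actM h x) by split => //; rewrite hx_v; exact: HV.
by rewrite disj.
Qed.

Lemma orbit_limit_act (g : G0) R m : orbit_limit R m -> orbit_limit (act g R) (actM g m).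
Proof.
have [[_ _ _ [_ actM_comp] Mc] _] := M_minimal.
move=> lim P U /Mc [s [V [NV HV]]].
pose P' := [seq (aut_inv g p.1, aut_inv g p.2) | p <- P].
have [h [Ah Vh]] := lim P' V NV.
exists (comp_aut g h); split; last by rewrite (actM_comp g h) //; exact: HV.
by move=> p Hp; have := Ah _ (map_f _ Hp); rewrite /actLO /=.
Qed.

Lemma orbit_limit_closed R m :
  (forall P U, nbhs m U -> exists R' m', [/\ agree R R' P, orbit_limit R' m' & U m']) ->
  orbit_limit R m.
Proof.
move=> R_lim P U; rewrite nbhsE => -[U' [oU' U'm] U'U].
have [R' [m' [AR' lim' U'm']]] := R_lim P U' (open_nbhs_nbhs (conj oU' U'm)).
have [g [Ag Ug]] := lim' P U' (open_nbhs_nbhs (conj oU' U'm')).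
by exists g; split; [move=> p Hp; rewrite Ag // AR' | exact: U'U].
Qed.

Variable f : LO -> M.
Hypothesis f_limit : forall R, XK F R -> orbit_limit R (f R).

(* [f] has a closed graph and a compact codomain, so it is continuous. *)
Lemma orbit_limit_map_continuous : {within XK F, continuous f}.
Proof.
have [[_ Mc _ _ _] _] := M_minimal.
apply/subspace_continuousP => R XR W /=; rewrite nbhsE => -[W' [oW' W'fR] W'W].
suff [P HP] : exists P, forall R', agree R R' P -> XK F R' -> W' (f R').
  by apply: (filterS _ (nbhs_agree R P)) => R' AR' XR'; apply: W'W; exact: HP.
apply: contrapT => not_near.
have [P|m m_lim] :=
  @agree_cluster _ _ _ [set R' | XK F R' /\ ~ W' (f R')] id f R Mc.
  apply: contrapT => none; apply: not_near; exists P => R' AR' XR'.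
  by apply: contrapT => nW; apply: none; exists R'.
have m_out : ~ W' m.
  move=> W'm; have [R' [[_ nW] _ W'R']] := m_lim [::] W' (open_nbhs_nbhs (conj oW' W'm)).
  exact: nW W'R'.
suff m_fR : m = f R by apply: m_out; rewrite m_fR.
apply: (orbit_limit_unique _ (f_limit XR)); apply: orbit_limit_closed => P U /(m_lim P).
by move=> [R' [[XR' _] AR' UR']]; exists R', (f R'); split => //; exact: f_limit.
Qed.

Lemma orbit_limit_map_equivariant g R : XK F R -> f (act g R) = actM g (f R).
Proof.
move=> XR; apply: (@orbit_limit_unique (act g R)).
  exact/f_limit/XK_invariant.
exact/orbit_limit_act/f_limit.
Qed.

Lemma orbit_limit_map_surjective : f @` XK F = setT.
Proof.
have [[_ Mc Mh _ _] Mmin] := M_minimal.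
have image_closed : closed (f @` XK F).
  apply: compact_closed => //; apply: continuous_compact.
    exact: orbit_limit_map_continuous.
  exact: XK_compact.
case: (Mmin _ image_closed) => // [g _ [R XR <-]|empty].
  by exists (act g R); [exact: XK_invariant | exact: orbit_limit_map_equivariant].
have : (f @` XK F) (f lt) by exists lt => //; exact: XK_lt0.
by rewrite empty.
Qed.

End Universality.

Lemma universal_of_rel_extremely_amenable {L0 : signature} {T : countType}
    (F : structure (ext_sig L0) T) :
  locally_finite F -> ultrahomogeneous F ->
  rel_extremely_amenable (@inG L0 T F) -> XK_universal F.
Proof.
move=> F_lf F_uh rea M actM M_minimal.
have [x x_fixed] := rea _ _ (proj1 M_minimal).
have /choice [f f_limit] : forall R, exists m, XK F R -> orbit_limit actM x R m.
  move=> R; have [XR|nXR] := pselect (XK F R); last by exists x => /nXR.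
  by have [m lim] := orbit_limit_exists M_minimal x XR; exists m.
exists f; split.
- exact (orbit_limit_map_continuous F_lf F_uh M_minimal x_fixed f_limit).
- exact (orbit_limit_map_surjective F_lf F_uh M_minimal x_fixed f_limit).
- exact (orbit_limit_map_equivariant F_lf F_uh M_minimal x_fixed f_limit).
Qed.

Theorem mainTheorem13 (L0 : signature) (K : fclass (ext_sig L0))
  (T : countType) (F : structure (ext_sig L0) T) :
  Fraisse_class K ->
  Fraisse_class (reduct_class K) ->
  (forall A, K A -> linear_order (order_of (fst_str A))) ->
  reasonable K ->
  is_Flim K F ->
  (rel_extremely_amenable (@inG L0 T F) /\ transitive_wrt_XK F (FixXK F))
  <-> XK_universal_minimal F.
Proof.
move=> _ _ _ _ [F_lf F_uh _]; split.
- move=> [rea trans]; split.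
  + exact: minimal_of_rel_extremely_amenable rea trans.
  + exact: universal_of_rel_extremely_amenable F_lf F_uh rea.
- move=> [XKmin XKuniv]; split.
  + exact: rel_extremely_amenable_of_universal XKuniv.
  + exact: transitive_Fix_of_minimal XKmin.
Qed.
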